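(* Let $\mathcal{M}=(S,A,\Delta,T,\rho)$ be a w\~pMDP with $T=\{t_0,\dots,t_n\}$ and $0=\rho(t_0)<\rho(t_1)<\dots<\rho(t_n)$, and let $\mathcal{N}$ be the \~pMDP obtained by adding fresh target states $\mathit{fin},\mathit{fail}$ (the only targets of $\mathcal{N}$), a fresh action $a\notin A$, and the transitions $(t_i,a,\mathit{fin})$ and $(t_i,a,t_{i-1})$ for $1\le i\le n$ and $(t_0,a,\mathit{fail})$. Then for every graph-preserving valuation $\mathsf{val}$ of $\mathcal{N}$ and every strategy $\sigma$ of $\mathcal{N}$, $0=\mathbb{P}^{t_0}[\Diamond \mathit{fin}]<\mathbb{P}^{t_1}[\Diamond \mathit{fin}]<\dots<\mathbb{P}^{t_n}[\Diamond \mathit{fin}]$, where probabilities are taken in the Markov chain induced by $\mathsf{val}$ and $\sigma$ on $\mathcal{N}$.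
   Context: A w\~pMDP $(S,A,\Delta,T,\rho)$ consists of finite states $S$, actions $A$, targets $T\subseteq S$ (without outgoing transitions), a set of transitions $\Delta\subseteq (S\setminus T)\times A\times S$ and weights $\rho:T\to\mathbb{Q}$; a \~pMDP is one with $T=\{\mathit{fin},\mathit{fail}\}$. A graph-preserving valuation assigns to each state-action pair $(s,a)$ with transitions in $\Delta$ a probability distribution with full support on $\{s':(s,a,s')\in\Delta\}$. A strategy maps each non-target state $s$ to an action $a$ available at $s$, i.e. such that $\Delta$ contains a transition $(s,a,s')$ (so in $\mathcal{N}$ the only action available at each $t_i$ is $a$); together with a valuation it induces a Markov chain, and $\mathbb{P}^s[\Diamond\mathit{fin}]$ is the probability of reaching $\mathit{fin}$ from $s$ in it. *)

From HB Require Import structures.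
From mathcomp Require Import all_boot all_order all_algebra.
From mathcomp Require Import classical_sets reals.
Set Implicit Arguments. Unset Strict Implicit. Unset Printing Implicit Defensive.
Import Order.TTheory GRing.Theory Num.Theory.
Local Open Scope ring_scope.

Section Construction.
Variables (S A : finType).

Definition NS : finType := (S + bool)%type.
Definition fin : NS := inr true.
Definition fail : NS := inr false.
(* Actions of N: actions of M (Some) plus the fresh action a = None. *)
Definition NA : finType := option A.

Definition N_target (s : NS) : bool := if s is inr _ then true else false.

Definition N_trans (Delta : S -> A -> S -> bool) (n : nat) (t : 'I_n.+1 -> S)
  (s : NS) (a : NA) (s' : NS) : bool :=
  match s, a with
  | inl x, Some b => if s' is inl y then Delta x b y else false
  | inl x, None =>
      match s' with
      | inr true => [exists i : 'I_n.+1, (0 < i)%N && (t i == x)]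
      | inl y => [exists i : 'I_n.+1, [&& (0 < i)%N, t i == x & t (inord i.-1) == y]]
      | inr false => t ord0 == x
      end
  | inr _, _ => false
  end.
End Construction.

Section MC.
Variables (St Ac : finType) (R : realType).
Variable (Delta : St -> Ac -> St -> bool) (target : St -> bool).

Definition graph_preserving (val : St -> Ac -> St -> R) : Prop :=
  forall s a, [exists s', Delta s a s'] ->
    [/\ forall s', Delta s a s' -> 0 < val s a s',
        forall s', ~~ Delta s a s' -> val s a s' = 0
      & \sum_(s' : St) val s a s' = 1].

Definition is_strategy (sigma : St -> Ac) : Prop :=
  forall s, ~~ target s -> exists s', Delta s (sigma s) s'.

Fixpoint reach_within (val : St -> Ac -> St -> R) (sigma : St -> Ac) (goal : St)
  (k : nat) (s : St) : R :=
  if target s then (s == goal)%:R else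
  match k with
  | 0 => (s == goal)%:R
  | k'.+1 => \sum_(s' : St) val s (sigma s) s' * reach_within val sigma goal k' s'
  end.

(* P^s[<> goal] = sup_k P^s[<>^{<=k} goal] (measure of an increasing union) *)
Definition prob_reach (val : St -> Ac -> St -> R) (sigma : St -> Ac) (goal : St)
  (s : St) : R :=
  sup (range (fun k => reach_within val sigma goal k s)).
End MC.

From HB Require Import structures.
From mathcomp Require Import all_boot all_order all_algebra.
From mathcomp Require Import classical_sets reals.
From mathcomp Require Import lra.
Set Implicit Arguments. Unset Strict Implicit. Unset Printing Implicit Defensive.
Import Order.TTheory GRing.Theory Num.Theory.
Local Open Scope ring_scope.

(* Under any strategy a target t_j of M can only take the fresh action, so from
   t_0 the chain moves to fail, and from t_(j+1) it moves to fin or to t_j with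
   positive probabilities p and q, p + q = 1.  Hence fin is reached from t_j
   within j steps if at all, P(t_0) = 0 and P(t_(j+1)) = p + q P(t_j).  As fail
   is reachable from every t_j, P(t_j) < 1, so P(t_(j+1)) - P(t_j) =
   p (1 - P(t_j)) > 0.  The weights rho only serve to make t injective. *)

Lemma sup_eq_ubound_mem (R : realType) (E : set R) (x : R) :
  E x -> ubound E x -> sup E = x.
Proof.
move=> Ex ubx; apply/le_anti/andP; split; first by apply: ge_sup => //; exists x.
by apply: ub_le_sup => //; exists x.
Qed.

Lemma inord0 (m : nat) : inord 0 = ord0 :> 'I_m.+1.
Proof. by apply: val_inj; rewrite /= inordK. Qed.

Lemma incr_ord_inj d (T : porderType d) (n : nat) (f : 'I_n.+1 -> T) :
  (forall i, (i < n)%N -> (f (inord i) < f (inord i.+1))%O) -> injective f.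
Proof.
move=> f_incr.
have f_mono : {in [pred i | (i <= n)%N] &,
    {homo (fun i => f (inord i)) : i j / (i < j)%N >-> (i < j)%O}}.
  apply: homo_ltn_in => [y x z|i j|i]; rewrite ?inE.
  - exact: lt_trans.
  - by move=> _ jn k /andP[_ kj]; rewrite inE ltnW // (leq_trans kj jn).
  - by move=> _; exact: f_incr.
move=> i j fij; apply: val_inj.
have in_range (k : 'I_n.+1) : nat_of_ord k \in [pred i | (i <= n)%N].
  by rewrite inE -ltnS.
case: (ltngtP i j) => // [ij | ji].
- by have := f_mono _ _ (in_range i) (in_range j) ij; rewrite !inord_val fij ltxx.
- by have := f_mono _ _ (in_range j) (in_range i) ji; rewrite !inord_val fij ltxx.
Qed.

Section GraphPreserving.
Variables (St Ac : finType) (R : realType) (Delta : St -> Ac -> St -> bool).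
Variable val : St -> Ac -> St -> R.
Hypothesis Hval : graph_preserving Delta val.

Lemma val_ge0 s a s' : [exists u, Delta s a u] -> 0 <= val s a s'.
Proof.
move=> /Hval [pos zero _].
by case: (boolP (Delta s a s')) => [/pos/ltW | /zero ->].
Qed.

Lemma expectation_on_succ s a (F : St -> R) : [exists u, Delta s a u] ->
  \sum_s' val s a s' * F s' = \sum_(s' | Delta s a s') val s a s' * F s'.
Proof.
move=> /Hval [_ zero _].
rewrite (bigID (Delta s a)) /= [X in _ + X]big1 ?addr0 // => s' /zero ->.
exact: mul0r.
Qed.

Lemma sum_val_succ s a : [exists u, Delta s a u] ->
  \sum_(s' | Delta s a s') val s a s' = 1.
Proof.
move=> succ; have [_ _ <-] := Hval succ.
have := expectation_on_succ (fun=> 1) succ.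
by under eq_bigr do rewrite mulr1; under [in RHS]eq_bigr do rewrite mulr1.
Qed.

Lemma expectation_one_succ s a u (F : St -> R) :
  (forall s', Delta s a s' = (s' == u)) -> \sum_s' val s a s' * F s' = F u.
Proof.
move=> succ_u.
have succ : [exists u, Delta s a u] by apply/existsP; exists u; rewrite succ_u.
have val_u : val s a u = 1 by rewrite -(sum_val_succ succ) (big_pred1 u).
by rewrite expectation_on_succ // (big_pred1 u) // val_u mul1r.
Qed.

Lemma expectation_two_succ s a u v (F : St -> R) : u != v ->
  (forall s', Delta s a s' = (s' == u) || (s' == v)) ->
  \sum_s' val s a s' * F s' = val s a u * F u + val s a v * F v.
Proof.
move=> uv succ_uv.
have succ : [exists u, Delta s a u] by apply/existsP; exists u; rewrite succ_uv eqxx.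
rewrite expectation_on_succ // (bigD1 u) /=; last by rewrite succ_uv eqxx.
congr (_ + _); apply: big_pred1 => s' /=; rewrite succ_uv.
by case: (eqVneq s' u) => [->|] /=; rewrite ?andbF ?andbT ?(negbTE uv).
Qed.

Lemma two_succ_probs s a u v : u != v ->
  (forall s', Delta s a s' = (s' == u) || (s' == v)) ->
  [/\ 0 < val s a u, 0 < val s a v & val s a u + val s a v = 1].
Proof.
move=> uv succ_uv.
have succ : [exists u, Delta s a u] by apply/existsP; exists u; rewrite succ_uv eqxx.
have [pos _ _] := Hval succ.
split; [apply: pos; rewrite succ_uv eqxx ?orbT // ..|].
have /= := expectation_two_succ (fun=> 1) uv succ_uv; rewrite !mulr1 => <-.
rewrite expectation_on_succ // -[RHS](sum_val_succ succ).
by apply: eq_bigr => s' _; rewrite mulr1.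
Qed.
End GraphPreserving.

Section ReachWithin.
Variables (St Ac : finType) (R : realType) (Delta : St -> Ac -> St -> bool).
Variables (target : St -> bool) (val : St -> Ac -> St -> R) (sigma : St -> Ac).
Variable goal : St.
Hypothesis Hval : graph_preserving Delta val.
Hypothesis Hsigma : is_strategy Delta target sigma.
Hypothesis goal_target : target goal.

Local Notation reach k s := (reach_within target val sigma goal k s).

Lemma reach_within_target k s : target s -> reach k s = (s == goal)%:R.
Proof. by case: k => [|k] /= ->. Qed.

Lemma reach_within0 s : ~~ target s -> reach 0 s = 0.
Proof.
move=> /negbTE s_nt /=; rewrite s_nt.
by case: eqVneq => // s_goal; move: goal_target; rewrite -s_goal s_nt.
Qed.

Lemma reach_within_succ k s : ~~ target s ->
  reach k.+1 s = \sum_s' val s (sigma s) s' * reach k s'.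
Proof. by move=> /negbTE /= ->. Qed.

Lemma strategy_val_ge0 s s' : ~~ target s -> 0 <= val s (sigma s) s'.
Proof. by move=> /Hsigma [u su]; apply: (val_ge0 Hval); apply/existsP; exists u. Qed.

Lemma reach_within_ge0 k s : 0 <= reach k s.
Proof.
elim: k s => [|k IH] s; have [s_t | s_nt] := boolP (target s);
  try by rewrite reach_within_target.
  by rewrite reach_within0.
rewrite reach_within_succ //; apply: sumr_ge0 => s' _.
by rewrite mulr_ge0 ?strategy_val_ge0.
Qed.

Lemma reach_within_le_succ k s : reach k s <= reach k.+1 s.
Proof.
have [s_t | s_nt] := boolP (target s); first by rewrite !reach_within_target.
elim: k s s_nt => [|k IH] s s_nt; first by rewrite reach_within0 // reach_within_ge0.
rewrite !reach_within_succ //; apply: ler_sum => s' _.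
rewrite ler_wpM2l ?strategy_val_ge0 //.
have [s'_t | s'_nt] := boolP (target s'); first by rewrite !reach_within_target.
exact: IH.
Qed.

Lemma reach_within_homo s :
  {homo (fun k => reach k s) : k k' / (k <= k')%N >-> k <= k'}.
Proof.
apply: homo_leq => [//|x y z|k]; first exact: le_trans.
exact: reach_within_le_succ.
Qed.

Lemma prob_reach_stable m s : (forall k, (m <= k)%N -> reach k s = reach m s) ->
  prob_reach target val sigma goal s = reach m s.
Proof.
move=> stable; apply: sup_eq_ubound_mem; first by exists m.
move=> _ [k _ <-]; have [/stable -> // | /ltnW] := leqP m k.
exact: reach_within_homo.
Qed.
End ReachWithin.

Section Ladder.
Variables (R : realType) (S A : finType) (Delta : S -> A -> S -> bool).
Variables (T : {set S}) (n : nat) (t : 'I_n.+1 -> S).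
Hypothesis HDelta : forall s a s', Delta s a s' -> s \notin T.
Hypothesis HT : forall x, x \in T <-> exists i, t i = x.
Hypothesis t_inj : injective t.
Variables (val : NS S -> NA A -> NS S -> R) (sigma : NS S -> NA A).
Hypothesis Hval : graph_preserving (N_trans Delta t) val.
Hypothesis Hsigma : is_strategy (N_trans Delta t) (@N_target S) sigma.

Local Notation rung j := (inl (t (inord j)) : NS S).
Local Notation reach k s := (reach_within (@N_target S) val sigma (fin S) k s).

Lemma N_trans_rung0 s' : N_trans Delta t (rung 0) None s' = (s' == fail S).
Proof.
rewrite inord0; case: s' => [y|[]] /=.
- by apply/existsP => -[i /and3P[i_gt0 /eqP/t_inj i0 _]]; rewrite i0 in i_gt0.
- by apply/existsP => -[i /andP[i_gt0 /eqP/t_inj i0]]; rewrite i0 in i_gt0.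
- exact: eqxx.
Qed.

Lemma N_trans_rungS j : (j < n)%N -> forall s',
  N_trans Delta t (rung j.+1) None s' = (s' == fin S) || (s' == rung j).
Proof.
move=> jn s'; have jSn : (j.+1 < n.+1)%N by [].
case: s' => [y|[]] /=.
- apply/existsP/eqP => [[i /and3P[_ /eqP/t_inj -> /eqP <-]] | [->]].
    by rewrite inordK.
  by exists (inord j.+1); rewrite !inordK // !eqxx.
- by apply/existsP; exists (inord j.+1); rewrite inordK // eqxx.
- by apply/eqP => /t_inj/(congr1 (@nat_of_ord _)); rewrite /= inordK.
Qed.

Lemma sigma_rung i : sigma (inl (t i)) = None.
Proof.
have t_in_T : t i \in T by apply/HT; exists i.
have [] := @Hsigma (inl (t i)) isT; case: (sigma _) => // b [y|//].
by move=> /HDelta; rewrite t_in_T.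
Qed.

Local Notation p j := (val (rung j.+1) None (fin S)).
Local Notation q j := (val (rung j.+1) None (rung j)).

Lemma rung_probs j : (j < n)%N -> [/\ 0 < p j, 0 < q j & p j + q j = 1].
Proof.
by move=> jn; apply: (two_succ_probs Hval) => // s'; rewrite N_trans_rungS.
Qed.

Lemma reach_rung0 k : reach k (rung 0) = 0.
Proof.
case: k => // k; rewrite reach_within_succ // sigma_rung.
by rewrite (expectation_one_succ Hval _ N_trans_rung0) reach_within_target.
Qed.

Lemma reach_rungS k j : (j < n)%N ->
  reach k.+1 (rung j.+1) = p j + q j * reach k (rung j).
Proof.
move=> jn; rewrite reach_within_succ // sigma_rung.
rewrite (expectation_two_succ Hval _ _ (N_trans_rungS jn)) //.
by rewrite reach_within_target // eqxx mulr1.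
Qed.

Lemma reach_rung_stable j k : (j <= n)%N -> (j <= k)%N ->
  reach k (rung j) = reach j (rung j).
Proof.
elim: j k => [|j IH] [|k] // jn jk; first by rewrite !reach_rung0.
by rewrite !reach_rungS // IH // ltnW.
Qed.

Lemma reach_rung_lt1 k j : (j <= n)%N -> reach k (rung j) < 1.
Proof.
elim: k j => [|k IH] [|j] jn; rewrite ?reach_rung0 ?reach_within0 ?ltr01 //.
have [p_gt0 q_gt0 pq1] := rung_probs jn.
by rewrite reach_rungS //; have := IH j (ltnW jn); nra.
Qed.

Lemma prob_reach_rung j : (j <= n)%N ->
  prob_reach (@N_target S) val sigma (fin S) (rung j) = reach j (rung j).
Proof.
move=> jn; apply: (prob_reach_stable Hval Hsigma) => // k.
exact: reach_rung_stable.
Qed.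

Lemma prob_reach_rungS j : (j < n)%N ->
  prob_reach (@N_target S) val sigma (fin S) (rung j.+1) =
  p j + q j * prob_reach (@N_target S) val sigma (fin S) (rung j).
Proof. by move=> jn; rewrite !prob_reach_rung ?reach_rungS // ltnW. Qed.

Lemma prob_reach_rung_lt1 j : (j <= n)%N ->
  prob_reach (@N_target S) val sigma (fin S) (rung j) < 1.
Proof. by move=> jn; rewrite prob_reach_rung // reach_rung_lt1. Qed.
End Ladder.

Theorem lemma1 (R : realType) (S A : finType)
  (Delta : S -> A -> S -> bool) (T : {set S}) (rho : S -> rat)
  (n : nat) (t : 'I_n.+1 -> S)
  (HDelta : forall s a s', Delta s a s' -> s \notin T)
  (HT : forall x, x \in T <-> exists i, t i = x)
  (Hrho0 : rho (t ord0) = 0)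
  (Hrho : forall i : nat, (i < n)%N -> rho (t (inord i)) < rho (t (inord i.+1)))
  (val : NS S -> NA A -> NS S -> R) (sigma : NS S -> NA A)
  (Hval : graph_preserving (N_trans Delta t) val)
  (Hsigma : is_strategy (N_trans Delta t) (@N_target S) sigma) :
  prob_reach (@N_target S) val sigma (fin S) (inl (t ord0)) = 0 /\
  (forall i : nat, (i < n)%N ->
     prob_reach (@N_target S) val sigma (fin S) (inl (t (inord i))) <
     prob_reach (@N_target S) val sigma (fin S) (inl (t (inord i.+1)))).
Proof.
have t_inj : injective t := inj_compr (incr_ord_inj (f := rho \o t) Hrho).
split.
  by rewrite -inord0 (prob_reach_rung HDelta HT t_inj Hval Hsigma) // reach_rung0.
move=> i lt_in.
have [p_gt0 q_gt0 pq1] := rung_probs t_inj Hval lt_in.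
have := prob_reach_rung_lt1 HDelta HT t_inj Hval Hsigma (ltnW lt_in).
by rewrite (prob_reach_rungS HDelta HT t_inj Hval Hsigma lt_in); nra.
Qed.
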